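(* The first difference sequence $\Delta(\mathbf{t}_{3/2})$ equals the Toeplitz word $\mathcal{T}(w)$ determined by the pattern $w=01?0?10??$ (a $(9,4)$-Toeplitz word).
   Context: The Thue--Morse word in base $3/2$ is the unique binary sequence $\mathbf{t}_{3/2}=(t_n)_{n\ge0}$ with $t_0=0$, $t_{3n}=t_{3n+1}=t_{2n}$ and $t_{3n+2}=1-t_{2n+1}$ for all $n\ge0$ (equivalently, $t_n$ is the digit sum modulo $2$ of the base-$3/2$ expansion of $n$, where $\langle 0\rangle$ is empty and $\langle n\rangle=\langle m\rangle d$ for $2n=3m+d$, $d\in\{0,1,2\}$). For a binary sequence $\mathbf{x}=(x_n)$, $\Delta(\mathbf{x})=(x_{n+1}-x_n\bmod 2)_{n\ge0}$. Toeplitz words: let $A$ be an alphabet and $?\notin A$; for a word $w\in A(A\cup\{?\})^*$ and an infinite word $\mathbf{u}$ over $A\cup\{?\}$, let $F_w(\mathbf{u})$ be the word obtained by replacing the successive occurrences of $?$ in $\mathbf{u}$ by the successive letters of $w^\omega=www\cdots$. Set $\mathcal{T}_0(w)=?^\omega$, $\mathcal{T}_{i+1}(w)=F_w(\mathcal{T}_i(w))$; the limit $\mathcal{T}(w)=\lim_i\mathcal{T}_i(w)\in A^{\mathbb{N}}$ exists and is the Toeplitz word determined by $w$; if $|w|=p$ and $w$ has $q$ occurrences of $?$, it is called a $(p,q)$-Toeplitz word. *)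

From mathcomp Require Import all_boot.
Set Implicit Arguments. Unset Strict Implicit. Unset Printing Implicit Defensive.

(* Digit sum of the base-3/2 expansion of n: <0> is empty, and
   <n> = <m> d where 2n = 3m + d, d in {0,1,2}.  Since m < n for n > 0,
   fuel n suffices; [digsum32 n] uses fuel n. *)
Fixpoint digsum32_fuel (fuel n : nat) : nat :=
  match fuel with
  | 0 => 0
  | k.+1 => if n == 0 then 0
            else ((n.*2) %% 3) + digsum32_fuel k ((n.*2) %/ 3)
  end.

Definition digsum32 (n : nat) : nat := digsum32_fuel n n.

(* Thue--Morse word in base 3/2 over {0,1} = {false,true}. *)
Definition t32 (n : nat) : bool := odd (digsum32 n).

Definition Delta (x : nat -> bool) : nat -> bool := fun n => x n.+1 (+) x n.

(* Toeplitz words: letters of A u {?} are [option A], with ? = None. *)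
Section Toeplitz.
Variable A : eqType.

(* F_w(u): replace the k-th occurrence (k = 0,1,...) of ? in u by the
   k-th letter of w^omega, i.e. nth (k mod |w|) of w. *)
Definition Ftoep (w : seq (option A)) (u : nat -> option A) : nat -> option A :=
  fun n => match u n with
           | Some a => Some a
           | None => nth None w ((count (fun m => u m == None) (iota 0 n)) %% size w)
           end.

Fixpoint Ttoep (w : seq (option A)) (i : nat) : nat -> option A :=
  match i with
  | 0 => fun _ => None
  | i'.+1 => Ftoep w (Ttoep w i')
  end.

Definition is_toeplitz_word (w : seq (option A)) (x : nat -> A) : Prop :=
  forall n, exists i0, forall i, i0 <= i -> Ttoep w i n = Some (x n).
End Toeplitz.

Definition w_pattern : seq (option bool) :=
  [:: Some false; Some true; None; Some false; None; Some true; Some false; None; None].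

From mathcomp Require Import all_boot zify.

Set Implicit Arguments.
Unset Strict Implicit.
Unset Printing Implicit Defensive.

(* Let p = |w| and let q be the number of ?'s in w.  Then T_{i+1}(w) is computed
   from T_i(w) blockwise: position p k + j carries w_j, or, when w_j = ?, the
   letter of T_i(w) at position q k + r_j, where r_j counts the ?'s among
   w_0 ... w_{j-1}.  Indeed this block substitution S_w commutes with F_w,
   because the ?'s of S_w u are those of u, in the same order.  Since w_0 is
   not ?, q k + r_j < p k + j, so by strong induction on positions every
   fixpoint of S_w is T(w).
   For w = 01?0?10?? the fixpoint equation for Delta(t_{3/2}) amounts to
   Delta(9k+j) = 0,1,Delta(4k),0,Delta(4k+1),1,0,Delta(4k+2),Delta(4k+3) for
   j = 0..8; it follows by applying twice the recurrences Delta(3n) = 0,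
   Delta(3n+1) = ~ Delta(2n), Delta(3n+2) = ~ Delta(2n+1), themselves
   consequences of t_{3n} = t_{3n+1} = t_{2n} and t_{3n+2} = 1 - t_{2n+1}. *)

Lemma count_take_lt (T : eqType) (x : T) (s : seq T) j :
  nth x s 0 != x -> 0 < j -> count_mem x (take j s) < j.
Proof.
case: s j => [|a s] [|j] //= a_neq _.
by rewrite (negbTE a_neq) ltnS (leq_trans (count_size _ _)) // size_take_min geq_minl.
Qed.

Section ToeplitzSubstitution.
Variables (A : eqType) (w : seq (option A)).
Hypothesis w_head : nth None w 0 != None.

Definition holes (u : nat -> option A) (n : nat) : nat :=
  count (fun m => u m == None) (iota 0 n).

Lemma holesS u n : holes u n.+1 = holes u n + (u n == None).
Proof. by rewrite /holes -addn1 iotaD count_cat /= add0n addn0. Qed.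

Definition toep_src (n : nat) : nat :=
  count_mem None w * (n %/ size w) + count_mem None (take (n %% size w) w).

Definition toep_subst (u : nat -> option A) (n : nat) : option A :=
  if nth None w (n %% size w) is Some a then Some a else u (toep_src n).

Lemma size_w_gt0 : 0 < size w.
Proof. by move: w_head; case: w. Qed.

Lemma toep_src_block k j : j <= size w ->
  toep_src (size w * k + j) = count_mem None w * k + count_mem None (take j w).
Proof.
rewrite leq_eqVlt => /orP[/eqP-> | j_lt]; rewrite /toep_src.
- by rewrite -mulnSr mulKn ?modnMr ?size_w_gt0 // take_size take0 addn0 mulnSr.
- rewrite [size w * k]mulnC divnMDl ?size_w_gt0 //.
  by rewrite modnMDl divn_small // modn_small // addn0.
Qed.

Lemma toep_srcS n :
  toep_src n.+1 = toep_src n + (nth None w (n %% size w) == None).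
Proof.
have lt_mod : n %% size w < size w by rewrite ltn_mod size_w_gt0.
rewrite {1 2}(divn_eq n (size w)) mulnC -addnS.
rewrite (toep_src_block _ lt_mod) (toep_src_block _ (ltnW lt_mod)).
by rewrite (take_nth None lt_mod) -cats1 count_cat addnA /= addn0.
Qed.

Lemma holes_toep_subst u n : holes (toep_subst u) n = holes u (toep_src n).
Proof.
elim: n => [|n IH]; first by rewrite /toep_src div0n mod0n take0 muln0.
rewrite holesS IH toep_srcS /toep_subst.
by case: (nth None w (n %% size w)) => [a|]; rewrite ?addn0 ?addn1 ?holesS.
Qed.

Lemma eq_Ftoep u v : u =1 v -> Ftoep w u =1 Ftoep w v.
Proof.
move=> uv n; rewrite /Ftoep uv.
by rewrite (eq_count (a2 := fun m => v m == None)) // => m; rewrite uv.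
Qed.

Lemma Ftoep_subst u : Ftoep w (toep_subst u) =1 toep_subst (Ftoep w u).
Proof.
move=> n; rewrite /Ftoep -/(holes _ n) holes_toep_subst.
by rewrite /toep_subst; case: (nth None w (n %% size w)).
Qed.

Lemma Ttoep_succ i : Ttoep w i.+1 =1 toep_subst (Ttoep w i).
Proof.
elim: i => [|i IH] n /=.
  rewrite /Ftoep /toep_subst (eq_count (a2 := predT)) // count_predT size_iota.
  by case: nth.
by rewrite (eq_Ftoep IH) Ftoep_subst.
Qed.

Lemma toep_subst_block u k j : j < size w ->
  toep_subst u (size w * k + j) =
  if nth None w j is Some a then Some a
  else u (count_mem None w * k + count_mem None (take j w)).
Proof.
move=> j_lt; rewrite /toep_subst toep_src_block 1?ltnW //.
by rewrite [size w * k]mulnC modnMDl modn_small.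
Qed.

Lemma toep_src_lt n : nth None w (n %% size w) = None -> toep_src n < n.
Proof.
move=> hole; have lt_mod : n %% size w < size w by rewrite ltn_mod size_w_gt0.
have j_gt0 : 0 < n %% size w.
  by case: (n %% size w) hole => // /eqP; rewrite (negbTE w_head).
rewrite {2}(divn_eq n (size w)) /toep_src [_ * size w]mulnC.
rewrite -addnS; apply: leq_add; first by rewrite leq_mul2r count_size orbT.
exact: count_take_lt.
Qed.

Lemma toep_subst_fixpoint_toeplitz (x : nat -> A) :
  (forall n, toep_subst (Some \o x) n = Some (x n)) -> is_toeplitz_word w x.
Proof.
move=> x_fix n; elim/ltn_ind: n => n IH.
have := x_fix n; rewrite /toep_subst.
case hole: (nth None w (n %% size w)) => [a|] /= x_n.
  by exists 1 => -[|i] // _; rewrite Ttoep_succ /toep_subst hole.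
have [i0 T_src] := IH _ (toep_src_lt hole).
exists i0.+1 => -[|i] // i_ge.
by rewrite Ttoep_succ /toep_subst hole T_src.
Qed.

End ToeplitzSubstitution.

Lemma digsum32_fuel_enough f g n :
  n <= f -> n <= g -> digsum32_fuel f n = digsum32_fuel g n.
Proof.
elim: f g n => [|f IH] [|g] [|n] //= n_le_f n_le_g.
by congr (_ + _); apply: IH; lia.
Qed.

Lemma digsum32_rec n :
  0 < n -> digsum32 n = n.*2 %% 3 + digsum32 (n.*2 %/ 3).
Proof.
case: n => [|n] // _; rewrite /digsum32 /=.
by congr (_ + _); apply: digsum32_fuel_enough; lia.
Qed.

Lemma t32_mul3 n : t32 (3 * n) = t32 (2 * n).
Proof.
case: n => [|n] //; rewrite /t32 digsum32_rec //.
have -> : (3 * n.+1).*2 %% 3 = 0 by lia.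
by have -> : (3 * n.+1).*2 %/ 3 = 2 * n.+1 by lia.
Qed.

Lemma t32_mul3D1 n : t32 (3 * n + 1) = t32 (2 * n).
Proof.
rewrite /t32 digsum32_rec ?addn1 //.
have -> : (3 * n).+1.*2 %% 3 = 2 by lia.
have -> : (3 * n).+1.*2 %/ 3 = 2 * n by lia.
by rewrite oddD.
Qed.

Lemma t32_mul3D2 n : t32 (3 * n + 2) = ~~ t32 (2 * n + 1).
Proof.
rewrite /t32 digsum32_rec ?addn2 //.
have -> : (3 * n).+2.*2 %% 3 = 1 by lia.
have -> : (3 * n).+2.*2 %/ 3 = 2 * n + 1 by lia.
by rewrite oddD.
Qed.

Lemma Delta_t32_mul3 n : Delta t32 (3 * n) = false.
Proof. by rewrite /Delta -addn1 t32_mul3D1 t32_mul3 addbb. Qed.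

Lemma Delta_t32_mul3D1 n : Delta t32 (3 * n + 1) = ~~ Delta t32 (2 * n).
Proof.
by rewrite /Delta -addn1 -addnA t32_mul3D2 t32_mul3D1 addn1 addNb.
Qed.

Lemma Delta_t32_mul3D2 n : Delta t32 (3 * n + 2) = ~~ Delta t32 (2 * n + 1).
Proof.
rewrite /Delta (_ : (3 * n + 2).+1 = 3 * n.+1) ?t32_mul3 ?t32_mul3D2; last lia.
by rewrite addbN; congr (~~ (t32 _ (+) _)); lia.
Qed.

Lemma Delta_t32_mul9D k j : j < 9 ->
  Delta t32 (9 * k + j) =
  nth false [:: false; true; Delta t32 (4 * k); false; Delta t32 (4 * k + 1);
                true; false; Delta t32 (4 * k + 2); Delta t32 (4 * k + 3)] j.
Proof.
case: j => [|[|[|[|[|[|[|[|[|//]]]]]]]]] _ /=.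
- by rewrite (_ : 9 * k + 0 = 3 * (3 * k)) ?Delta_t32_mul3 //; lia.
- rewrite (_ : 9 * k + 1 = 3 * (3 * k) + 1) ?Delta_t32_mul3D1; last lia.
  by rewrite (_ : 2 * (3 * k) = 3 * (2 * k)) ?Delta_t32_mul3 //; lia.
- rewrite (_ : 9 * k + 2 = 3 * (3 * k) + 2) ?Delta_t32_mul3D2; last lia.
  rewrite (_ : 2 * (3 * k) + 1 = 3 * (2 * k) + 1) ?Delta_t32_mul3D1; last lia.
  by rewrite negbK; congr (Delta t32 _); lia.
- by rewrite (_ : 9 * k + 3 = 3 * (3 * k + 1)) ?Delta_t32_mul3 //; lia.
- rewrite (_ : 9 * k + 4 = 3 * (3 * k + 1) + 1) ?Delta_t32_mul3D1; last lia.
  rewrite (_ : 2 * (3 * k + 1) = 3 * (2 * k) + 2) ?Delta_t32_mul3D2; last lia.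
  by rewrite negbK; congr (Delta t32 _); lia.
- rewrite (_ : 9 * k + 5 = 3 * (3 * k + 1) + 2) ?Delta_t32_mul3D2; last lia.
  by rewrite (_ : 2 * (3 * k + 1) + 1 = 3 * (2 * k + 1)) ?Delta_t32_mul3 //; lia.
- by rewrite (_ : 9 * k + 6 = 3 * (3 * k + 2)) ?Delta_t32_mul3 //; lia.
- rewrite (_ : 9 * k + 7 = 3 * (3 * k + 2) + 1) ?Delta_t32_mul3D1; last lia.
  rewrite (_ : 2 * (3 * k + 2) = 3 * (2 * k + 1) + 1) ?Delta_t32_mul3D1; last lia.
  by rewrite negbK; congr (Delta t32 _); lia.
- rewrite (_ : 9 * k + 8 = 3 * (3 * k + 2) + 2) ?Delta_t32_mul3D2; last lia.
  rewrite (_ : 2 * (3 * k + 2) + 1 = 3 * (2 * k + 1) + 2) ?Delta_t32_mul3D2; last lia.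
  by rewrite negbK; congr (Delta t32 _); lia.
Qed.

Lemma Delta_t32_toep_fixpoint n :
  toep_subst w_pattern (Some \o Delta t32) n = Some (Delta t32 n).
Proof.
have j_lt : n %% 9 < 9 by rewrite ltn_mod.
rewrite (divn_eq n 9) mulnC; move: (n %/ 9) (n %% 9) j_lt => k j j_lt.
rewrite toep_subst_block // Delta_t32_mul9D //.
by case: j j_lt => [|[|[|[|[|[|[|[|[|//]]]]]]]]] _; rewrite /= ?addn0.
Qed.

Theorem proposition11 : is_toeplitz_word w_pattern (Delta t32).
Proof.
exact: (toep_subst_fixpoint_toeplitz (w := w_pattern)) Delta_t32_toep_fixpoint.
Qed.
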